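(* For any finite simple graph $G$ on $n$ vertices with $c(G)$ connected components, $\mathrm{mur}(G)\le n-c(G)$.
   Context: For a finite simple undirected graph $G$ on vertices $v_1,\dots,v_n$, let $A_G$ be its $(0,1)$-adjacency matrix, $D_G=\mathrm{diag}(d_1,\dots,d_n)$ with $d_i$ the degree of $v_i$, $I$ the $n\times n$ identity matrix and $J$ the $n\times n$ all-ones matrix. A universal adjacency matrix of $G$ is any matrix $\alpha A_G+\beta I+\gamma J+\delta D_G$ with real scalars $\alpha,\beta,\gamma,\delta$ and $\alpha\neq 0$. The minimum universal rank $\mathrm{mur}(G)$ is the minimum rank over all universal adjacency matrices of $G$. *)

From HB Require Import structures.
From mathcomp Require Import all_boot all_order all_algebra.
From mathcomp Require Import boolp reals.
Set Implicit Arguments. Unset Strict Implicit. Unset Printing Implicit Defensive.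
Import Order.TTheory GRing.Theory Num.Theory.
Local Open Scope ring_scope.

Definition simple_graph (n : nat) (e : rel 'I_n) : Prop :=
  symmetric e /\ irreflexive e.

Definition degree (n : nat) (e : rel 'I_n) (i : 'I_n) : nat := #|[set j | e i j]|.

Definition adjmx (R : pzRingType) (n : nat) (e : rel 'I_n) : 'M[R]_n :=
  \matrix_(i, j) (e i j)%:R.

Definition degmx (R : pzRingType) (n : nat) (e : rel 'I_n) : 'M[R]_n :=
  diag_mx (\row_i (degree e i)%:R).

Definition onesmx (R : pzRingType) (n : nat) : 'M[R]_n := const_mx 1.

Definition univ_adj (R : pzRingType) (n : nat) (e : rel 'I_n) (a b c d : R) : 'M[R]_n :=
  a *: adjmx R e + b%:M + c *: onesmx R n + d *: degmx R e.

Definition is_univ_rank (R : fieldType) (n : nat) (e : rel 'I_n) (k : nat) : Prop :=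
  exists a b c d : R, a != 0 /\ \rank (univ_adj e a b c d) = k.

Lemma univ_rank_ex (R : fieldType) (n : nat) (e : rel 'I_n) :
  exists k, `[< @is_univ_rank R n e k >].
Proof.
exists (\rank (univ_adj e (1 : R) 0 0 0)); apply/asboolP.
by exists 1, 0, 0, 0; split; [exact: oner_neq0|].
Qed.

Definition mur (R : fieldType) (n : nat) (e : rel 'I_n) : nat :=
  ex_minn (@univ_rank_ex R n e).

Definition ncomp (n : nat) (e : rel 'I_n) : nat := n_comp e 'I_n.

From HB Require Import structures.
From mathcomp Require Import all_boot all_order all_algebra.
From mathcomp Require Import boolp reals.
Set Implicit Arguments. Unset Strict Implicit. Unset Printing Implicit Defensive.
Import Order.TTheory GRing.Theory Num.Theory.
Local Open Scope ring_scope.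

(* The Laplacian D - A is the universal adjacency matrix with
   (alpha, beta, gamma, delta) = (-1, 0, 0, 1). The indicator row of every
   connected component lies in its left kernel, and these rows have disjoint
   supports, so they are linearly independent; hence
   rank (D - A) <= n - c(G). *)

Definition lapmx (R : pzRingType) (n : nat) (e : rel 'I_n) : 'M[R]_n :=
  degmx R e - adjmx R e.

Lemma mur_le_rank (R : fieldType) (n : nat) (e : rel 'I_n) (a b c d : R) :
  a != 0 -> (mur R e <= \rank (univ_adj e a b c d))%N.
Proof.
move=> a_neq0; rewrite /mur; case: ex_minnP => m _ min_m; apply: min_m.
by apply/asboolP; exists a, b, c, d.
Qed.

Lemma univ_adj_lapmx (R : pzRingType) (n : nat) (e : rel 'I_n) :
  univ_adj e (-1 : R) 0 0 1 = lapmx R e.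
Proof. by rewrite /univ_adj scaleN1r raddf0 scale0r scale1r !addr0 addrC. Qed.

Lemma lapmxE (R : pzRingType) (n : nat) (e : rel 'I_n) (i j : 'I_n) :
  lapmx R e i j = (degree e i)%:R *+ (i == j) - (e i j)%:R.
Proof. by rewrite !mxE. Qed.

Lemma closed_indicator_mulmx_lapmx (R : pzRingType) (n : nat) (e : rel 'I_n)
    (a : {pred 'I_n}) :
  symmetric e -> closed e a -> \row_j (a j)%:R *m lapmx R e = 0.
Proof.
move=> sym_e closed_a; apply/rowP => k; rewrite !mxE.
under eq_bigr => j _ do rewrite mxE lapmxE mulrBr.
rewrite sumrB (bigD1 k) //= big1 => [|j /negbTE neq_jk]; last first.
  by rewrite neq_jk mulr0.
rewrite eqxx mulr1n addr0; apply/eqP; rewrite subr_eq0; apply/eqP.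
have neighbour_sum :
    \sum_j (a j)%:R * (e j k)%:R = \sum_(j in [set j | e k j]) (a k)%:R :> R.
  rewrite [RHS]big_mkcond; apply: eq_bigr => j _; rewrite inE sym_e.
  case: ifP => [/closed_a | _]; rewrite ?mulr0 //.
  by rewrite !unfold_in => ->; rewrite mulr1.
by rewrite neighbour_sum sumr_const /degree mulr_natr.
Qed.

Lemma ncomp_roots (n : nat) (e : rel 'I_n) : ncomp e = #|roots e|.
Proof. by apply: eq_card => x; rewrite !inE andbT. Qed.

Definition compmx (R : pzRingType) (n : nat) (e : rel 'I_n) :
    'M[R]_(#|roots e|, n) :=
  \matrix_(i, j) (fingraph.root e j == enum_val i)%:R.

Lemma root_enum_val_roots (n : nat) (e : rel 'I_n) (i : 'I_#|roots e|) :
  fingraph.root e (enum_val i) = enum_val i.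
Proof. exact/eqP/(enum_valP i). Qed.

Lemma row_free_compmx (F : fieldType) (n : nat) (e : rel 'I_n) :
  row_free (compmx F e).
Proof.
apply/row_freeP; exists (\matrix_(j, i) (j == enum_val i)%:R).
apply/matrixP => i k; rewrite !mxE (bigD1 (enum_val k)) //= big1 => [|j].
  rewrite !mxE eqxx mulr1 root_enum_val_roots addr0.
  by rewrite (inj_eq enum_val_inj) eq_sym.
by move=> /negbTE neq_j; rewrite !mxE neq_j mulr0.
Qed.

Lemma compmx_mulmx_lapmx (R : pzRingType) (n : nat) (e : rel 'I_n) :
  symmetric e -> compmx R e *m lapmx R e = 0.
Proof.
move=> sym_e; apply/row_matrixP => i; rewrite row_mul row0.
have -> : row i (compmx R e) =
    \row_j ([pred j | fingraph.root e j == enum_val i] j)%:R.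
  by apply/rowP => j; rewrite !mxE.
apply: closed_indicator_mulmx_lapmx => // x y e_xy /=.
suff eq_root : fingraph.root e x = fingraph.root e y by rewrite !inE /= eq_root.
by apply/(fingraph.rootP (sym_connect_sym sym_e)); exact: connect1.
Qed.

Lemma mxrank_le_sub_row_free_annihilator (F : fieldType) (m n p : nat)
    (K : 'M[F]_(m, n)) (A : 'M[F]_(n, p)) :
  row_free K -> K *m A = 0 -> (\rank A <= n - m)%N.
Proof.
move=> /eqP rank_K /sub_kermxP/mxrankS; rewrite mxrank_ker rank_K => le_m.
by rewrite leq_subRL ?(leq_trans le_m) ?leq_subr // addnC -leq_subRL ?rank_leq_row.
Qed.

Theorem theorem3 (R : realType) (n : nat) (e : rel 'I_n) :
  simple_graph e -> (mur R e <= n - ncomp e)%N.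
Proof.
move=> [sym_e _].
have neg1_neq0 : (-1 : R) != 0 by rewrite oppr_eq0 oner_neq0.
apply: leq_trans (mur_le_rank e 0 0 1 neg1_neq0) _.
rewrite univ_adj_lapmx ncomp_roots.
exact: mxrank_le_sub_row_free_annihilator (row_free_compmx R e)
  (compmx_mulmx_lapmx R sym_e).
Qed.
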